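(* Assume the setting below. Define $\beta_{TDMA}(x,L)=C\max\{\lfloor x/p\rfloor L,\ x-\lceil x/p\rceil(p-L)\}$ and $$\beta_{ST}(t)=\min_{0\le i\le N-1}\ \sum_{j=i}^{i+N-1}\beta_{TDMA}\big(t+p-L_j-g_i-o_{j,i},\ L_j\big),\qquad t\ge0,$$ where $g_i=o_i-(o_{i-1}+L_{i-1})$ is the idle time between the closing of the preceding ST window and the opening of window $i$. Then for all $s\in\mathbb R$ and $\Delta t\ge 0$, $C\cdot\Delta t_{ST}(s,s+\Delta t)\ge\beta_{ST}(\Delta t)$; i.e. $\beta_{ST}$ is a strict service curve for ST traffic at the port (non-preemption mode).
   Context: Fix an output port with physical link rate $C>0$. Its gate control list (GCL) is periodic with period $p>0$ and contains $N\ge 1$ scheduled-traffic (ST) windows per period. Window $k\in\{0,\dots,N-1\}$ is the interval $[o_k,o_k+L_k)$, where $0\le o_0<o_1<\dots<o_{N-1}<p$, $L_k\ge 0$, $o_k+L_k\le o_{k+1}$ for $k<N-1$ and $o_{N-1}+L_{N-1}\le o_0+p$. Indices are extended to all integers periodically: $o_{k+N}=o_k+p$, $L_{k+N}=L_k$. Relative offsets are $o_{j,i}=o_j-o_i$. Let $S=\bigcup_{k\in\mathbb Z}[o_k,o_k+L_k)$ and for $s\le t$ let $\Delta t_{ST}(s,t)$ be the Lebesgue measure of $S\cap[s,t]$. *)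

From HB Require Import structures.
From mathcomp Require Import all_boot all_order all_algebra.
From mathcomp Require Import all_classical all_reals all_analysis.
Set Implicit Arguments. Unset Strict Implicit. Unset Printing Implicit Defensive.
Import Order.TTheory GRing.Theory Num.Theory.
Local Open Scope classical_set_scope.
Local Open Scope ring_scope.

Section GCL.
Variables (R : realType) (p : R) (N : nat) (o L : nat -> R).

(* periodic extension of window indices to all integers:
   o_{k+N} = o_k + p, L_{k+N} = L_k *)
Definition oz (k : int) : R := o `|(k %% N)%Z|%N + ((k %/ N)%Z)%:~R * p.
Definition Lz (k : int) : R := L `|(k %% N)%Z|%N.

Definition ST_set : set R := [set x | exists k : int, oz k <= x /\ x < oz k + Lz k].

Definition gap (i : int) : R := oz i - (oz (i - 1) + Lz (i - 1)).

Definition orel (j i : int) : R := oz j - oz i.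
End GCL.

Definition beta_TDMA (R : realType) (C p : R) (x Lw : R) : R :=
  C * Num.max ((Num.floor (x / p))%:~R * Lw) (x - (Num.ceil (x / p))%:~R * (p - Lw)).

Definition beta_term (R : realType) (C p : R) (N : nat) (o L : nat -> R) (t : R) (i : nat) : R :=
  \sum_(i <= j < i + N)
     beta_TDMA C p (t + p - Lz N L j%:Z - gap p N o L i%:Z - orel p N o j%:Z i%:Z)
               (Lz N L j%:Z).

Definition beta_ST (R : realType) (C p : R) (N : nat) (o L : nat -> R) (t : R) : R :=
  \big[Num.min/beta_term C p N o L t 0%N]_(i < N) beta_term C p N o L t i.

Definition dt_ST (R : realType) (p : R) (N : nat) (o L : nat -> R) (s t : R) : \bar R :=
  (@lebesgue_measure R) (ST_set p N o L `&` `[s, t]).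

From Pilot Require Import Defs.
From HB Require Import structures.
From mathcomp Require Import all_boot all_order all_algebra.
From mathcomp Require Import all_classical all_reals all_analysis.
From mathcomp Require Import ring lra zify.
Set Implicit Arguments. Unset Strict Implicit. Unset Printing Implicit Defensive.
Import Order.TTheory GRing.Theory Num.Theory.
Local Open Scope classical_set_scope.
Local Open Scope ring_scope.

(* Write c_k = o_k + L_k for the closing time of window k.  Given a start s,
   choose k with c_{k-1} <= s <= c_k.  The ST time in [s, s + dt] is at least
   the ST time offered by the windows k, k+1, ... before the horizon
   e = c_{k-1} + dt: either s <= o_k and nothing is lost, or s lies inside
   window k and the rest of that window compensates the later horizon.
   Group the windows k, k+1, ... by residue mod N: window k+t (t < N) recurs
   with period p and first opens o_{k+t,k} + g_k after c_{k-1}.  A window of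
   length L recurring with period P and first opening at most P - L after a
   reference point offers, before the reference point plus y, at least
   beta_TDMA (y + P - L - offset, L) (the classical TDMA bound).  Summing over
   t gives the (k mod N)-th term of beta_ST, hence a bound on the minimum. *)

Lemma lebesgue_itv_co (R : realType) (x y : R) :
  lebesgue_measure (`[x, y[%classic : set R) = (Num.max 0 (y - x))%:E.
Proof.
rewrite lebesgue_measure_itv /= lte_fin; case: ltP => hxy.
  by rewrite -EFinD; congr (_%:E); apply/esym/max_idPr; lra.
by congr (_%:E); apply/esym/max_idPl; lra.
Qed.

Lemma lebesgue_itv_cc (R : realType) (x y : R) :
  lebesgue_measure (`[x, y]%classic : set R) = (Num.max 0 (y - x))%:E.
Proof.
rewrite lebesgue_measure_itv /= lte_fin; case: ltP => hxy.
  by rewrite -EFinD; congr (_%:E); apply/esym/max_idPr; lra.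
by congr (_%:E); apply/esym/max_idPl; lra.
Qed.

(* The TDMA bound for a single periodic window of length [Lw] and period [P]
   whose m-th copy is [o1 + m P, o1 + m P + Lw): up to time [e], with
   x = e - o1 + P - Lw >= 0, the copies offer at least beta_TDMA (x, Lw). *)
Section PeriodicWindow.
Variables (R : realType) (P Lw o1 e : R).

Definition copy_service (m : nat) : R :=
  Num.max 0 (Num.min (o1 + m%:R * P + Lw) e - (o1 + m%:R * P)).

Local Notation x := (e - o1 + P - Lw).

Lemma copy_service_ge0 m : 0 <= copy_service m.
Proof. by rewrite /copy_service le_max lexx. Qed.

Lemma copy_service_full m : 0 <= Lw -> m.+1%:R * P <= x -> copy_service m = Lw.
Proof.
rewrite -natr1 mulrDl mul1r => hLw hm.
have hclose : o1 + m%:R * P + Lw <= e by lra.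
by rewrite /copy_service (min_l hclose) max_r; lra.
Qed.

Lemma copy_service_partial m : x < (m%:R + 1) * P ->
  e - o1 - m%:R * P <= copy_service m.
Proof.
rewrite mulrDl mul1r => hm.
have hopen : e <= o1 + m%:R * P + Lw by lra.
by rewrite /copy_service (min_r hopen) le_max; apply/orP; right; lra.
Qed.

(* with n = floor (x / P), the copies 0, ..., n-1 are full and copy n is served
   for e - o1 - n P; the two branches of beta_TDMA correspond to
   ceil (x / P) = n or n + 1 *)
Lemma tdma_le_copy_service (C : R) (K : nat) :
  0 < P -> 0 <= Lw -> o1 + Lw <= e + P -> 0 <= C -> (`|Num.floor (x / P)| < K)%N ->
  beta_TDMA C P x Lw <= C * \sum_(0 <= m < K) copy_service m.
Proof.
move=> hP hLw hx0 hC hK; apply: ler_wpM2l => //.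
have hfl0 : 0 <= Num.floor (x / P) by rewrite floor_ge0 divr_ge0 ?(ltW hP) //; lra.
set n := `|Num.floor (x / P)|%N in hK.
have nR : (Num.floor (x / P))%:~R = n%:R :> R by rewrite /n natr_absz ger0_norm.
clearbody n.
have hnx : n%:R * P <= x by rewrite -nR -ler_pdivlMr // floor_le.
have hxn : x < (n%:R + 1) * P.
  by rewrite -ltr_pdivrMr // -nR -[1]/(1%:~R) -rmorphD floorD1_gt.
have hxc : x <= (Num.ceil (x / P))%:~R * P by rewrite -ler_pdivrMr // ceil_ge.
have full : \sum_(0 <= m < n) copy_service m = n%:R * Lw.
  rewrite (eq_big_nat _ _ (F2 := fun=> Lw)) ?sumr_const_nat ?subn0 ?mulr_natl //.
  move=> m /andP [_ hm]; apply: copy_service_full => //; apply: le_trans hnx.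
  by rewrite ler_pM2r // ler_nat.
have first_copies : n%:R * Lw + copy_service n <= \sum_(0 <= m < K) copy_service m.
  rewrite (big_cat_nat _ (n := n.+1)) //= big_nat_recr //= full lerDl.
  by apply: sumr_ge0 => m _; apply: copy_service_ge0.
apply: le_trans first_copies; rewrite /beta_TDMA nR ge_max; apply/andP; split.
  by rewrite lerDl copy_service_ge0.
have hpart := copy_service_partial hxn.
have hcopy0 := copy_service_ge0 n.
rewrite ceil_floor rmorphD /= nR in hxc *.
by case: (_ \isn't a _) in hxc * => /=; rewrite ?mulr1z ?mulr0z ?addr0 in hxc *; nra.
Qed.

End PeriodicWindow.

Lemma abs_floor_le (R : realType) (a b : R) :
  0 <= a -> a <= b -> (`|Num.floor a| <= `|Num.floor b|)%N.
Proof.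
move=> ha hab; have := le_floor hab; have : 0 <= Num.floor a by rewrite floor_ge0.
by lia.
Qed.

Lemma sum_nat_blocks (V : nmodType) (n K : nat) (F : nat -> V) :
  \sum_(0 <= u < n * K) F u = \sum_(0 <= t < n) \sum_(0 <= m < K) F (t + m * n)%N.
Proof.
elim: K => [|K IH].
  by rewrite muln0 big_geq // big1 // => t _; rewrite big_geq.
rewrite mulnS addnC (big_cat_nat _ (n := n * K)) ?leq0n ?leq_addr //= IH.
have -> : \sum_(n * K <= u < n * K + n) F u = \sum_(0 <= t < n) F (t + K * n)%N.
  rewrite -{1}(add0n (n * K)%N) big_addn addKn.
  by apply: eq_bigr => t _; rewrite mulnC.
by rewrite -big_split /=; apply: eq_bigr => t _; rewrite big_nat_recr.
Qed.

Section PeriodicGCL.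
Variables (R : realType) (p : R) (N : nat) (o L : nat -> R).
Hypothesis hN : (0 < N)%N.

Local Notation oz := (oz p N o).
Local Notation Lz := (Lz N L).

Lemma index_decomp (k : int) :
  exists (m : int) (j : nat), (j < N)%N /\ k = m * N%:Z + j%:Z.
Proof.
have N0 : N%:Z != 0 by rewrite eqz_nat; lia.
exists (k %/ N%:Z)%Z, `|(k %% N%:Z)%Z|%N; split; last first.
  by rewrite gez0_abs ?modz_ge0 // -divz_eq.
by rewrite -ltz_nat gez0_abs ?modz_ge0 // ltz_pmod // ltz_nat.
Qed.

Lemma window_copy (m : int) (j : nat) : (j < N)%N ->
  oz (m * N%:Z + j%:Z) = o j + m%:~R * p /\ Lz (m * N%:Z + j%:Z) = L j.
Proof.
move=> hj; have N0 : N%:Z != 0 by rewrite eqz_nat; lia.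
have hjN : (0 <= j%:Z < N%:Z) by rewrite ltz_nat hj.
by rewrite /Defs.oz /Defs.Lz divzMDl // divz_small // modzMDl modz_small // addr0.
Qed.

Lemma window_period (k q : int) :
  oz (k + q * N%:Z) = oz k + q%:~R * p /\ Lz (k + q * N%:Z) = Lz k.
Proof.
have [m [j [hj ->]]] := index_decomp k.
have -> : m * N%:Z + j%:Z + q * N%:Z = (m + q) * N%:Z + j%:Z by ring.
have [om Lm] := window_copy m hj; have [omq Lmq] := window_copy (m + q) hj.
by rewrite om Lm omq Lmq rmorphD /=; split => //; ring.
Qed.

Hypothesis hL : forall k : nat, (k < N)%N -> 0 <= L k.
Hypothesis hdisj : forall k : nat, (k.+1 < N)%N -> o k + L k <= o k.+1.
Hypothesis hwrap : o N.-1 + L N.-1 <= o 0%N + p.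

Lemma Lz_ge0 (k : int) : 0 <= Lz k.
Proof.
have [m [j [hj ->]]] := index_decomp k.
by rewrite (window_copy m hj).2; apply: hL.
Qed.

Lemma close_le_next_open (k : int) : oz k + Lz k <= oz (k + 1).
Proof.
have [m [j [hj ->]]] := index_decomp k.
have [om Lm] := window_copy m hj.
case: (ltnP j.+1 N) => hj1.
  have -> : m * N%:Z + j%:Z + 1 = m * N%:Z + j.+1%:Z by rewrite -addn1 PoszD addrA.
  by rewrite om Lm (window_copy m hj1).1; have := hdisj hj1; lra.
have ej : j = N.-1 by lia.
have -> : m * N%:Z + j%:Z + 1 = (m + 1) * N%:Z + 0%N%:Z.
  by rewrite ej -addrA -PoszD addn1 prednK // mulrDl mul1r addr0.
rewrite om Lm (window_copy (m + 1) hN).1 rmorphD /=.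
by have := hwrap; rewrite -ej; lra.
Qed.

Definition wend (k : int) : R := oz k + Lz k.

Lemma wend_mono (k : int) (n : nat) : wend k <= wend (k + n%:Z).
Proof.
elim: n => [|n IH]; first by rewrite addr0.
apply: (le_trans IH); rewrite /wend -addn1 PoszD addrA.
by have := close_le_next_open (k + n%:Z); have := Lz_ge0 (k + n%:Z + 1); lra.
Qed.

Lemma wend_le_open (k : int) (n : nat) : wend k <= oz (k + n.+1%:Z).
Proof.
rewrite -addn1 PoszD addrA.
exact: le_trans (wend_mono k n) (close_le_next_open _).
Qed.

Lemma wend_period (k : int) : wend (k + N%:Z) = wend k + p.
Proof.
by rewrite /wend; have := window_period k 1; rewrite mul1r => -[-> ->]; lra.
Qed.

Local Notation S := (ST_set p N o L).
Local Notation service := (dt_ST p N o L).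

Lemma ST_set_measurable : measurable S.
Proof.
rewrite (_ : S = \bigcup_(k : int) `[oz k, oz k + Lz k[%classic).
  apply: countable_bigcupT_measurable; first exact: countableP.
  by move=> k; apply: measurable_itv.
apply/seteqP; split => x /=.
  by move=> [k hk]; exists k => //=; rewrite in_itv /=; apply/andP.
by move=> [k _]; rewrite /= in_itv /= => /andP hk; exists k.
Qed.

Lemma ST_itv_measurable (a b : R) : measurable (S `&` `[a, b]%classic).
Proof. by apply: measurableI; [apply: ST_set_measurable | apply: measurable_itv]. Qed.

Lemma window_sub_ST (k : int) (u b : R) :
  oz k <= u -> b <= wend k -> `[u, b[%classic `<=` S.
Proof.
move=> hku hbk x /=; rewrite in_itv /= => /andP [hux hxb].
by exists k; split; [apply: le_trans hux | apply: lt_le_trans hbk].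
Qed.

Lemma service_split (a u b c e : R) :
  a <= u -> b <= c -> b <= e -> a <= c -> `[u, b[%classic `<=` S ->
  ((Num.max 0 (b - u))%:E + service c e <= service a e)%E.
Proof.
move=> hau hbc hbe hac hubS.
have sub : `[u, b[%classic `|` (S `&` `[c, e]%classic) `<=` S `&` `[a, e]%classic.
  move=> x [xub | [Sx]].
    split; first exact: hubS.
    by move: xub; rewrite /= !in_itv /= => /andP [? ?]; apply/andP; split; lra.
  by rewrite /= !in_itv /= => /andP [? ?]; split => //; apply/andP; split; lra.
have disj : `[u, b[%classic `&` (S `&` `[c, e]%classic) = set0.
  apply/seteqP; split => x //=; rewrite !in_itv /=.
  by move=> [/andP [_ hxb] [_ /andP [hcx _]]]; lra.
rewrite /dt_ST -lebesgue_itv_co.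
rewrite -(measureU lebesgue_measure (measurable_itv _) (ST_itv_measurable _ _) disj).
apply: le_measure; rewrite ?inE.
- by apply: measurableU; [apply: measurable_itv | apply: ST_itv_measurable].
- exact: ST_itv_measurable.
- exact: sub.
Qed.

Lemma service_extend (c e f : R) :
  (service c f <= service c e + (Num.max 0 (f - Num.max e c))%:E)%E.
Proof.
rewrite /dt_ST -lebesgue_itv_cc.
apply: le_trans (measureU2 lebesgue_measure (ST_itv_measurable _ _) (measurable_itv _)).
apply: le_measure; rewrite ?inE.
- exact: ST_itv_measurable.
- by apply: measurableU; [apply: ST_itv_measurable | apply: measurable_itv].
move=> x [Sx]; rewrite /= in_itv /= => /andP [hcx hxf].
case: (leP x e) => hxe; first by left; split => //=; rewrite in_itv /= hcx hxe.
by right; rewrite /= in_itv /= hxf andbT ge_max hcx andbT ltW.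
Qed.

Definition served (e : R) (k : int) : R := Num.max 0 (Num.min (wend k) e - oz k).

Lemma served_mono (e e' : R) (k : int) : e <= e' -> served e k <= served e' k.
Proof. by move=> hee'; apply: le_max2 => //; apply: lerB => //; apply: le_min2. Qed.

(* the windows k, k+1, ..., k+n-1 are disjoint subsets of [oz k, +oo) *)
Lemma service_ge_served (n : nat) (k : int) (a e : R) : a <= oz k ->
  ((\sum_(0 <= u < n) served e (k + u%:Z))%:E <= service a e)%E.
Proof.
elim: n k a => [|n IH] k a hak; first by rewrite big_geq // measure_ge0.
rewrite big_nat_recl // addr0.
under eq_bigr => u _ do rewrite -addn1 addnC PoszD addrA.
set b := Num.min (wend k) e.
have hbk : b <= wend k by rewrite ge_min lexx.
have hclose := close_le_next_open k; have hLk := Lz_ge0 k.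
apply: le_trans
  (service_split (c := oz (k + 1)) hak _ _ _ (window_sub_ST (lexx _) hbk)).
- by rewrite EFinD leeD2l // IH.
- by apply: le_trans hclose.
- by rewrite ge_min lexx orbT.
- by rewrite /wend in hclose; lra.
Qed.

Lemma service_from_window_end (k : int) (s d : R) : 0 <= d ->
  oz k <= s -> s <= wend k -> (service (wend k) (wend k + d) <= service s (s + d))%E.
Proof.
move=> hd hks hsk.
set c := wend k; set e := s + d; set b := Num.min c e.
have hbc : b <= c by rewrite ge_min lexx.
have hbe : b <= e by rewrite ge_min lexx orbT.
have len : c + d - Num.max e c = b - s.
  by rewrite /b /e; case: (leP c (s + d)) => _; lra.
apply: le_trans (service_extend c e (c + d)) _; rewrite len addeC.
exact: service_split (lexx s) hbc hbe hsk (window_sub_ST hks hbc).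
Qed.

Lemma wend_search (k0 : int) (s : R) (n : nat) :
  wend k0 <= s -> s <= wend (k0 + n%:Z) -> exists k, wend (k - 1) <= s <= wend k.
Proof.
elim: n => [|n IH] hk0s hsn.
  rewrite addr0 in hsn; exists k0; rewrite hsn andbT; apply: le_trans hk0s.
  by have := wend_mono (k0 - 1) 1; rewrite subrK.
case: (leP s (wend (k0 + n%:Z))) => hs; first exact: IH.
exists (k0 + n.+1%:Z); rewrite hsn andbT.
by rewrite -addn1 PoszD addrA addrK ltW.
Qed.

Hypothesis hp : 0 < p.

Lemma exists_enclosing_window (s : R) : exists k, wend (k - 1) <= s <= wend k.
Proof.
set q := Num.floor ((s - wend (-1)) / p).
have wq : wend (-1 + q * N%:Z) = wend (-1) + q%:~R * p.
  by rewrite /wend (window_period _ _).1 (window_period _ _).2; ring.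
apply: (@wend_search (-1 + q * N%:Z) s N).
  rewrite wq; have := floor_le ((s - wend (-1)) / p).
  by rewrite ler_pdivlMr // -/q => ?; lra.
rewrite wend_period wq; have := floorD1_gt ((s - wend (-1)) / p).
by rewrite ltr_pdivrMr // -/q rmorphD /= => ?; apply: ltW; lra.
Qed.

Lemma service_ge_block (s d : R) (n : nat) : 0 <= d -> exists k,
  ((\sum_(0 <= u < n) served (wend (k - 1) + d) (k + u%:Z))%:E <= service s (s + d))%E.
Proof.
move=> hd; have [k /andP [hks hsk]] := exists_enclosing_window s.
case: (leP s (oz k)) => hs.
  exists k; apply: le_trans (service_ge_served n (s + d) hs).
  by rewrite lee_fin; apply: ler_sum_nat => u _; apply: served_mono; lra.
exists (k + 1); rewrite addrK.
apply: le_trans (service_from_window_end hd (ltW hs) hsk).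
exact: service_ge_served (close_le_next_open k).
Qed.

Definition tdma_arg (d : R) (k : int) (t : nat) : R :=
  d + p - Lz (k + t%:Z) - gap p N o L k - orel p N o (k + t%:Z) k.

Definition block_bound (C d : R) (k : int) : R :=
  \sum_(0 <= t < N) beta_TDMA C p (tdma_arg d k t) (Lz (k + t%:Z)).

Lemma beta_term_block (C d : R) (j : nat) :
  beta_term C p N o L d j = block_bound C d j%:Z.
Proof.
rewrite /beta_term -{1}[j]add0n big_addn addKn.
by apply: eq_bigr => t _; rewrite addnC PoszD.
Qed.

Lemma block_bound_period (C d : R) (k q : int) :
  block_bound C d (k + q * N%:Z) = block_bound C d k.
Proof.
apply: eq_bigr => t _; rewrite /tdma_arg /gap /orel.
have -> : k + q * N%:Z + t%:Z = k + t%:Z + q * N%:Z by ring.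
have -> : k + q * N%:Z - 1 = k - 1 + q * N%:Z by ring.
rewrite !(window_period _ _).1 !(window_period _ _).2.
by congr beta_TDMA; ring.
Qed.

(* the TDMA bound applied to each residue class t of the windows k + t + m N *)
Lemma block_bound_le_served (C d : R) (k : int) (K : nat) :
  0 <= C -> 0 <= d -> (`|Num.floor ((d + p) / p)| < K)%N ->
  block_bound C d k <= C * \sum_(0 <= u < N * K) served (wend (k - 1) + d) (k + u%:Z).
Proof.
move=> hC hd hK; rewrite sum_nat_blocks mulr_sumr; apply: ler_sum_nat => t /andP [_ ht].
set c := wend (k - 1); set o1 := oz (k + t%:Z); set Lw := Lz (k + t%:Z).
have hLw : 0 <= Lw := Lz_ge0 _.
have hco : c <= o1.
  by have := wend_le_open (k - 1) t; rewrite -addn1 PoszD addrACA subrr addr0.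
have hwin : o1 + Lw <= c + p.
  have := wend_mono (k + t%:Z) (N - 1 - t)%N.
  have -> : k + t%:Z + (N - 1 - t)%N%:Z = k - 1 + N%:Z by lia.
  by rewrite wend_period.
have xE : tdma_arg d k t = (c + d) - o1 + p - Lw.
  by rewrite /tdma_arg /gap /orel /c /o1 /Lw /wend; ring.
have hxK : (`|Num.floor (((c + d) - o1 + p - Lw) / p)| < K)%N.
  apply: leq_ltn_trans hK; apply: abs_floor_le.
    by apply: divr_ge0; [lra | apply: ltW].
  by apply: ler_wpM2r; [rewrite invr_ge0 ltW | lra].
rewrite xE; apply: le_trans (tdma_le_copy_service hp hLw _ hC hxK) _; first by lra.
apply: ler_wpM2l => //; apply: ler_sum_nat => m _.
have -> : k + (t + m * N)%N%:Z = k + t%:Z + m%:Z * N%:Z by rewrite PoszD PoszM addrA.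
by rewrite /served /wend (window_period _ _).1 (window_period _ _).2.
Qed.

Lemma strict_service_curve (C s d : R) : 0 < C -> 0 <= d ->
  ((beta_ST C p N o L d)%:E <= C%:E * service s (s + d))%E.
Proof.
move=> hC hd.
set K := `|Num.floor ((d + p) / p)|.+1.
have [k hk] := service_ge_block s (N * K) hd.
have [m [j [hj ek]]] := index_decomp k.
have hbeta : beta_ST C p N o L d <= block_bound C d k.
  rewrite ek addrC block_bound_period -beta_term_block.
  exact: (bigmin_le _ (Ordinal hj)).
have hblock := block_bound_le_served k (ltW hC) hd (ltnSn _).
set windows := \sum_(0 <= u < N * K) _ in hk hblock.
have hscaled : ((C * windows)%:E <= C%:E * service s (s + d))%E.
  by rewrite EFinM; apply: lee_wpmul2l; [rewrite lee_fin ltW | exact: hk].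
by apply: le_trans hscaled; rewrite lee_fin; apply: le_trans hblock.
Qed.

End PeriodicGCL.

Theorem lemma4 (R : realType) (C p : R) (N : nat) (o L : nat -> R)
  (hC : 0 < C) (hp : 0 < p) (hN : (0 < N)%N)
  (ho0 : 0 <= o 0%N)
  (hoinc : forall k : nat, (k.+1 < N)%N -> o k < o k.+1)
  (holast : o N.-1 < p)
  (hL : forall k : nat, (k < N)%N -> 0 <= L k)
  (hdisj : forall k : nat, (k.+1 < N)%N -> o k + L k <= o k.+1)
  (hwrap : o N.-1 + L N.-1 <= o 0%N + p) :
  forall (s dt : R), 0 <= dt ->
    ((beta_ST C p N o L dt)%:E <= C%:E * dt_ST p N o L s (s + dt))%E.
Proof. by move=> s dt hdt; apply: strict_service_curve. Qed.
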